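(* Let $\sigma>0$, let $\kappa_0,\kappa_1$ satisfy $0<\kappa_1<\kappa_0<1$, and let $t_1\in(0,\sigma)$. Set \[ \lambda^\star(\kappa_0,\kappa_1,t_1):=\frac{\kappa_0-\kappa_1}{g_*(\kappa_1,\kappa_0)\int_0^{t_1}A^+(0,\xi)\,d\xi} \] and let $0<\gamma_1\le(\kappa_0-\kappa_1)/t_1$. Then for every $\lambda>\lambda^\star(\kappa_0,\kappa_1,t_1)$, the solution $(x(t),y(t))$ of \[ x'=y,\qquad y'=-\lambda a^+(t)g(x) \] with $x(0)=\kappa_0$, $y(0)=0$ satisfies $x(t_1)<\kappa_1$ and $y(t_1)<-\gamma_1$.
   Context: $a\in L^1(0,\sigma)$ with positive part $a^+$, and $A^+(t',t''):=\int_{t'}^{t''}a^+(\xi)\,d\xi$; it is assumed that $A^+(0,t)>0$ for all $t\in(0,\sigma]$. $g\colon\mathbb{R}\to[0,+\infty)$ is the extension by zero outside $[0,1]$ of a locally Lipschitz continuous function $g\colon[0,1]\to[0,+\infty)$ with $g(0)=g(1)=0$, $g(s)>0$ for $0<s<1$ and $\lim_{s\to0^+}g(s)/s=0$. For $0\le\kappa'<\kappa''\le1$, $g_*(\kappa',\kappa''):=\min_{s\in[\kappa',\kappa'']}g(s)$. Solutions are in the Carathéodory sense on $[0,\sigma]$. *)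

From HB Require Import structures.
From mathcomp Require Import all_boot all_order all_algebra.
From mathcomp Require Import all_classical all_reals all_analysis.
Set Implicit Arguments. Unset Strict Implicit. Unset Printing Implicit Defensive.
Import Order.TTheory GRing.Theory Num.Theory.
Import numFieldNormedType.Exports.
Local Open Scope classical_set_scope.
Local Open Scope ring_scope.

Definition pos_part {R : realType} (a : R -> R) : R -> R :=
  fun t => Num.max (a t) 0.

Definition integ {R : realType} (t' t'' : R) (f : R -> R) : R :=
  Rintegral (@lebesgue_measure R) `[t', t''] f.

Definition Aplus {R : realType} (a : R -> R) (t' t'' : R) : R :=
  integ t' t'' (pos_part a).

(* g_*(k', k'') := min_{s in [k', k'']} g s (taken as inf; attained since g is continuous) *)
Definition gstar {R : realType} (g : R -> R) (k' k'' : R) : R :=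
  inf [set g s | s in `[k', k'']].

(* Standing hypotheses on g: g is the extension by zero outside [0,1] of a
   locally Lipschitz g : [0,1] -> [0,+oo) with g(0)=g(1)=0, g>0 on (0,1),
   g(s)/s -> 0 as s -> 0+. *)
Definition g_hyp {R : realType} (g : R -> R) : Prop :=
  (forall s, (s < 0 \/ 1 < s) -> g s = 0) /\
  (forall s, 0 <= s <= 1 -> 0 <= g s) /\
  (forall s, 0 <= s <= 1 -> exists delta : R, 0 < delta /\ exists L : R,
      forall u v, 0 <= u <= 1 -> 0 <= v <= 1 -> `|u - s| < delta -> `|v - s| < delta ->
        `|g u - g v| <= L * `|u - v|) /\
  g 0 = 0 /\ g 1 = 0 /\
  (forall s, 0 < s < 1 -> 0 < g s) /\
  ((fun s => g s / s) @ (0 : R)^'+ --> (0 : R)).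

Definition a_hyp {R : realType} (sigma : R) (a : R -> R) : Prop :=
  (@lebesgue_measure R).-integrable `[0, sigma] (EFin \o a) /\
  (forall t, 0 < t <= sigma -> 0 < Aplus a 0 t).

(* (x, y) is a Caratheodory solution on [0, sigma] of
     x' = y, y' = - lambda a^+(t) g(x), x(0) = k0, y(0) = 0,
   written in the equivalent integral (absolutely continuous) form. *)
Definition carath_sol {R : realType} (sigma lambda : R) (a g : R -> R) (k0 : R)
    (x y : R -> R) : Prop :=
  (@lebesgue_measure R).-integrable `[0, sigma] (EFin \o y) /\
  (@lebesgue_measure R).-integrable `[0, sigma]
      (EFin \o (fun s => pos_part a s * g (x s))) /\
  (forall t, 0 <= t <= sigma -> x t = k0 + integ 0 t y) /\
  (forall t, 0 <= t <= sigma ->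
      y t = - (lambda * integ 0 t (fun s => pos_part a s * g (x s)))).

Definition lambda_star {R : realType} (a g : R -> R) (k0 k1 t1 : R) : R :=
  (k0 - k1) / (gstar g k1 k0 * integ 0 t1 (fun xi => Aplus a 0 xi)).

From HB Require Import structures.
From mathcomp Require Import all_boot all_order all_algebra.
From mathcomp Require Import all_classical all_reals all_analysis.
From mathcomp Require Import lra.
Import Order.TTheory GRing.Theory Num.Theory.
Import numFieldNormedType.Exports.
Local Open Scope classical_set_scope.
Local Open Scope ring_scope.

(* Since a^+ and g are nonnegative, y decreases from y(0) = 0 and x decreases
   from x(0) = k0.  If we had x(t1) >= k1, then x would stay in [k1, k0] on
   [0, t1], so g(x) >= g_*(k1, k0) there; integrating twice gives
   x(t1) <= k0 - lambda g_*(k1, k0) \int_0^t1 A^+(0, xi) dxi < k1 as soon as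
   lambda > lambda^*.  Finally, y being nonincreasing, x(t1) >= k0 + t1 y(t1),
   whence y(t1) < (k1 - k0) / t1 <= - gamma1. *)

Section interval_integrals.
Context {R : realType}.
Notation mu := (@lebesgue_measure R).
Implicit Types (f : R -> R) (A B D : set R).

Lemma RintegralN D f : measurable D -> mu.-integrable D (EFin \o f) ->
  \int[mu]_(x in D) - f x = - \int[mu]_(x in D) f x.
Proof.
move=> mD fi; rewrite -mulN1r -RintegralZl //.
by apply: eq_Rintegral => z _; rewrite mulN1r.
Qed.

Lemma ge0_subset_Rintegral A B f : measurable A -> measurable B -> A `<=` B ->
  mu.-integrable B (EFin \o f) -> (forall x, B x -> 0 <= f x) ->
  \int[mu]_(x in A) f x <= \int[mu]_(x in B) f x.
Proof.
move=> mA mB AB fi f0.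
have fiA : mu.-integrable A (EFin \o f) by apply: integrableS fi.
rewrite /Rintegral fine_le //; try exact: integrable_fin_num.
by apply: ge0_subset_integral => //; exact: measurable_int fi.
Qed.

Lemma le0_subset_Rintegral A B f : measurable A -> measurable B -> A `<=` B ->
  mu.-integrable B (EFin \o f) -> (forall x, B x -> f x <= 0) ->
  \int[mu]_(x in B) f x <= \int[mu]_(x in A) f x.
Proof.
move=> mA mB AB fi f0.
have fiA : mu.-integrable A (EFin \o f) by apply: integrableS fi.
rewrite -lerN2 -!RintegralN //; apply: ge0_subset_Rintegral => //.
- have -> : EFin \o (fun x => - f x) = -%E \o (EFin \o f).
    by apply/funext => x /=; rewrite EFinN.
  exact: integrableN.
- by move=> x Bx; rewrite oppr_ge0 f0.
Qed.

Lemma integrableZl_EFin D f k : measurable D -> mu.-integrable D (EFin \o f) ->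
  mu.-integrable D (EFin \o (fun x => k * f x)).
Proof.
move=> mD fi; have -> : EFin \o (fun x => k * f x) = (fun x => k%:E * (EFin \o f) x)%E.
  by apply/funext => x; rewrite /= EFinM.
exact: integrableZl.
Qed.

Lemma integrable_subitv f (a b c d : R) : a <= c -> d <= b ->
  mu.-integrable `[a, b] (EFin \o f) -> mu.-integrable `[c, d] (EFin \o f).
Proof. by move=> ac db; apply: integrableS => //; apply: subset_itvScc; rewrite bnd_simp. Qed.

Lemma integrable_cst_itv (a b k : R) : mu.-integrable `[a, b] (EFin \o cst k).
Proof.
apply: continuous_compact_integrable; first exact: segment_compact.
by apply: continuous_in_subspaceT => x _; exact: cst_continuous.
Qed.

Lemma integ_cst (a b k : R) : a <= b -> integ a b (cst k) = k * (b - a).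
Proof.
move=> ab; rewrite /integ Rintegral_cst //= lebesgue_measure_itv /= lte_fin.
by case: ltgtP ab => // -> _; rewrite subrr.
Qed.

Lemma ge_integ_cst f (a b k : R) : a <= b -> mu.-integrable `[a, b] (EFin \o f) ->
  (forall x, a <= x <= b -> k <= f x) -> k * (b - a) <= integ a b f.
Proof.
move=> ab fi fk; rewrite -integ_cst //.
by apply: le_Rintegral => //; exact: integrable_cst_itv.
Qed.

Lemma ge0_integ_mono f (a s t b : R) : s <= t -> t <= b ->
  mu.-integrable `[a, b] (EFin \o f) -> (forall x, a <= x <= b -> 0 <= f x) ->
  integ a s f <= integ a t f.
Proof.
move=> st tb fi f0; apply: ge0_subset_Rintegral => //.
- by apply: subset_itvScc; rewrite bnd_simp.
- exact: integrable_subitv fi.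
- by move=> x; rewrite /= in_itv /= => /andP[ax xt]; rewrite f0 // ax (le_trans xt).
Qed.

Lemma le0_integ_mono f (a s t b : R) : s <= t -> t <= b ->
  mu.-integrable `[a, b] (EFin \o f) -> (forall x, a <= x <= b -> f x <= 0) ->
  integ a t f <= integ a s f.
Proof.
move=> st tb fi f0; apply: le0_subset_Rintegral => //.
- by apply: subset_itvScc; rewrite bnd_simp.
- exact: integrable_subitv fi.
- by move=> x; rewrite /= in_itv /= => /andP[ax xt]; rewrite f0 // ax (le_trans xt).
Qed.

End interval_integrals.

Section nonlinearity.
Context {R : realType} {g : R -> R}.
Hypothesis hg : g_hyp g.

Lemma g_ge0 s : 0 <= g s.
Proof.
have [g_out [g_ge0 _]] := hg.
have [s0|s_lt0] := leP 0 s; last by rewrite g_out //; left.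
have [s1|s_gt1] := leP s 1; first by rewrite g_ge0 // s0.
by rewrite g_out //; right.
Qed.

Lemma g_continuous s : 0 < s < 1 -> {for s, continuous g}.
Proof.
move=> /andP[s_gt0 s_lt1].
have s01 : 0 <= s <= 1 by rewrite !ltW.
have [_ [_ [g_lip _]]] := hg.
have [d [d_gt0 [L gL]]] := g_lip s s01.
have L1_gt0 : 0 < `|L| + 1 by rewrite ltr_pwDr.
apply/cvgrPdist_le => e e_gt0; near=> t.
have : `|s - t| < Num.min d (Num.min s (1 - s)).
  by near: t; apply: cvgr_dist_lt; rewrite // !lt_min d_gt0 s_gt0 subr_gt0.
rewrite !lt_min => /andP[std /andP[st_lt_s st_lt_1s]].
have t01 : 0 <= t <= 1.
  by move: st_lt_s st_lt_1s; rewrite !ltr_distlC => /andP[? _] /andP[_ ?]; apply/andP; split; lra.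
have := gL s t s01 t01; rewrite subrr normr0 distrC => /(_ d_gt0 std) gst.
apply: le_trans gst _.
have : `|s - t| <= e / (`|L| + 1) by near: t; apply: cvgr_dist_le; rewrite // divr_gt0.
rewrite ler_pdivlMr // => ste.
apply: le_trans ste; rewrite mulrC ler_wpM2l // (le_trans (ler_norm L)) // lerDl.
Unshelve. all: by end_near.
Qed.

Lemma gstar_le k' k'' s : k' <= s <= k'' -> gstar g k' k'' <= g s.
Proof.
move=> s_in; apply: ge_inf; last by exists s; rewrite //= in_itv.
by exists 0 => _ [u _ <-]; exact: g_ge0.
Qed.

Lemma gstar_gt0 k' k'' : 0 < k' -> k' <= k'' -> k'' < 1 -> 0 < gstar g k' k''.
Proof.
move=> k'_gt0 k'k'' k''_lt1.
have g_cont : {within `[k', k''], continuous g}.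
  apply: continuous_in_subspaceT => s; rewrite in_setE /= in_itv /= => /andP[k's sk''].
  by apply: g_continuous; apply/andP; split; lra.
have [c c_in c_min] := EVT_min k'k'' g_cont.
have gc_gt0 : 0 < g c.
  have [_ [_ [_ [_ [_ [g_gt0 _]]]]]] := hg.
  by move: c_in; rewrite in_itv /= => /andP[k'c ck'']; apply: g_gt0; apply/andP; split; lra.
apply: (lt_le_trans gc_gt0); apply: lb_le_inf.
  by exists (g k'), k' => //=; rewrite in_itv /= lexx k'k''.
by move=> _ [s s_in <-]; exact: c_min.
Qed.

End nonlinearity.

Section positive_part_primitive.
Context {R : realType} {sigma : R} {a : R -> R}.
Notation mu := (@lebesgue_measure R).
Hypothesis a_int : mu.-integrable `[0, sigma] (EFin \o a).

Lemma pos_part_ge0 t : 0 <= pos_part a t.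
Proof. by rewrite /pos_part le_max lexx orbT. Qed.

Lemma integrable_pos_part : mu.-integrable `[0, sigma] (EFin \o pos_part a).
Proof.
have -> : EFin \o pos_part a = (EFin \o a)^\+%E.
  by apply/funext => t; rewrite funeposE /= /pos_part EFin_max.
exact: integrable_funepos.
Qed.

Lemma Aplus_ge0 t : 0 <= Aplus a 0 t.
Proof. by apply: Rintegral_ge0 => s _; exact: pos_part_ge0. Qed.

Lemma Aplus_nondecreasing s t : s <= t -> t <= sigma -> Aplus a 0 s <= Aplus a 0 t.
Proof.
move=> st t_le; apply: ge0_integ_mono st t_le integrable_pos_part _.
by move=> x _; exact: pos_part_ge0.
Qed.

Lemma integrable_Aplus t : 0 <= t <= sigma ->
  mu.-integrable `[0, t] (EFin \o Aplus a 0).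
Proof.
move=> /andP[t_ge0 t_le].
apply: continuous_compact_integrable; first exact: segment_compact.
apply: parameterized_integral_continuous => //.
exact: integrable_subitv integrable_pos_part.
Qed.

Lemma integ_Aplus_gt0 t : 0 < t <= sigma -> 0 < Aplus a 0 (t / 2) ->
  0 < integ 0 t (Aplus a 0).
Proof.
move=> /andP[t_gt0 t_le] A_half_gt0.
have t01 : 0 <= t <= sigma by rewrite (ltW t_gt0).
have A_int := @integrable_Aplus t t01.
apply: (@lt_le_trans _ _ (integ (t / 2) t (Aplus a 0))).
  apply: (lt_le_trans _ (@ge_integ_cst _ _ (t / 2) t (Aplus a 0 (t / 2)) _ _ _)).
  - by apply: mulr_gt0 => //; lra.
  - lra.
  - by apply: integrable_subitv A_int => //; lra.
  - by move=> x /andP[tx xt]; apply: Aplus_nondecreasing => //; lra.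
apply: ge0_subset_Rintegral => //.
- by apply: subset_itvScc; rewrite bnd_simp //; lra.
- by move=> x _; exact: Aplus_ge0.
Qed.

End positive_part_primitive.

Section caratheodory_solution.
Context {R : realType} {sigma lambda : R} {a g : R -> R} {k0 : R} {x y : R -> R}.
Notation mu := (@lebesgue_measure R).
Hypotheses (lambda_ge0 : 0 <= lambda) (g_ge0 : forall s, 0 <= g s).
Hypothesis sol : carath_sol sigma lambda a g k0 x y.

Let forcing_ge0 s : 0 <= pos_part a s * g (x s).
Proof. by rewrite mulr_ge0 // pos_part_ge0. Qed.

Lemma sol_x0 : 0 <= sigma -> x 0 = k0.
Proof.
have [_ [_ [x_eq _]]] := sol; move=> sigma_ge0.
by rewrite x_eq ?lexx // /integ set_itv1 Rintegral_set1 addr0.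
Qed.

Lemma sol_y_nonincreasing s t : 0 <= s -> s <= t -> t <= sigma -> y t <= y s.
Proof.
have [_ [h_int [_ y_eq]]] := sol; move=> s_ge0 st t_le.
rewrite !y_eq; [|lra|lra]; rewrite lerN2 ler_wpM2l //.
by apply: ge0_integ_mono st t_le h_int _ => z _; exact: forcing_ge0.
Qed.

Lemma sol_y_le0 t : 0 <= t <= sigma -> y t <= 0.
Proof.
have [_ [_ [_ y_eq]]] := sol; move=> t_in.
rewrite y_eq // oppr_le0 mulr_ge0 //.
by apply: Rintegral_ge0 => z _; exact: forcing_ge0.
Qed.

Lemma sol_x_nonincreasing s t : 0 <= s -> s <= t -> t <= sigma -> x t <= x s.
Proof.
have [y_int [_ [x_eq _]]] := sol; move=> s_ge0 st t_le.
rewrite !x_eq; [|lra|lra]; rewrite lerD2l.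
by apply: le0_integ_mono st t_le y_int _ => z z_in; exact: sol_y_le0.
Qed.

Lemma sol_x_ge t : 0 <= t <= sigma -> k0 + y t * t <= x t.
Proof.
have [y_int [_ [x_eq _]]] := sol; move=> /andP[t_ge0 t_le].
rewrite x_eq ?t_ge0 // lerD2l -[X in _ * X]subr0.
apply: ge_integ_cst => //; first exact: integrable_subitv y_int.
by move=> z /andP[z_ge0 zt]; exact: sol_y_nonincreasing.
Qed.

Lemma sol_x_le_k0 t : 0 <= t <= sigma -> x t <= k0.
Proof.
move=> /andP[t_ge0 t_le]; rewrite -sol_x0; last exact: le_trans t_le.
exact: sol_x_nonincreasing.
Qed.

Section lower_bound_on_g.
Context {m t : R}.
Hypotheses (a_int : mu.-integrable `[0, sigma] (EFin \o a)) (t_in : 0 <= t <= sigma).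
Hypothesis m_le_g : forall s, 0 <= s <= t -> m <= g (x s).

Lemma sol_y_le s : 0 <= s <= t -> y s <= - (lambda * m) * Aplus a 0 s.
Proof.
have [_ [h_int [_ y_eq]]] := sol; move=> /andP[s_ge0 st].
have s_in : 0 <= s <= sigma by rewrite s_ge0 (le_trans st) //; case/andP: t_in.
have pa_int : mu.-integrable `[0, s] (EFin \o pos_part a).
  by apply: integrable_subitv (integrable_pos_part a_int); case/andP: s_in.
rewrite y_eq // mulNr lerN2 -mulrA ler_wpM2l // /Aplus /integ -RintegralZl //.
apply: le_Rintegral => //.
- exact: integrableZl_EFin.
- by apply: integrable_subitv h_int; case/andP: s_in.
- move=> z; rewrite /= in_itv /= => /andP[z_ge0 zs].
  by rewrite mulrC ler_wpM2l ?pos_part_ge0 // m_le_g // z_ge0 (le_trans zs).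
Qed.

Lemma sol_x_le : x t <= k0 - lambda * m * integ 0 t (Aplus a 0).
Proof.
have [y_int [_ [x_eq _]]] := sol.
have A_int := integrable_Aplus a_int t t_in.
rewrite x_eq // lerD2l -mulNr /integ -RintegralZl //.
apply: le_Rintegral => //.
- by apply: integrable_subitv y_int; case/andP: t_in.
- exact: integrableZl_EFin.
- by move=> z; rewrite /= in_itv /=; exact: sol_y_le.
Qed.

End lower_bound_on_g.

End caratheodory_solution.

Theorem lemma2p2 (R : realType) (sigma : R) (a g : R -> R)
  (k0 k1 t1 gamma1 lambda : R) (x y : R -> R) :
  0 < sigma -> a_hyp sigma a -> g_hyp g ->
  0 < k1 -> k1 < k0 -> k0 < 1 ->
  0 < t1 -> t1 < sigma ->
  0 < gamma1 -> gamma1 <= (k0 - k1) / t1 ->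
  lambda_star a g k0 k1 t1 < lambda ->
  carath_sol sigma lambda a g k0 x y ->
  x t1 < k1 /\ y t1 < - gamma1.
Proof.
move=> sigma_gt0 [a_int A_gt0] hg k1_gt0 k1k0 k0_lt1 t1_gt0 t1_lt _ gamma1_le.
rewrite /lambda_star => lambda_gt sol.
have t1_in : 0 <= t1 <= sigma by rewrite !ltW.
have gstar_pos : 0 < gstar g k1 k0 by apply: gstar_gt0 => //; exact: ltW.
have I_pos : 0 < integ 0 t1 (Aplus a 0).
  apply: (integ_Aplus_gt0 a_int); first by rewrite t1_gt0 ltW.
  by apply: A_gt0; apply/andP; split; lra.
have lambda_ge0 : 0 <= lambda.
  apply: le_trans (ltW lambda_gt).
  by rewrite divr_ge0 ?subr_ge0 ?(ltW k1k0) // mulr_ge0 // ltW.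
have x_lt : x t1 < k1.
  rewrite ltNge; apply/negP => k1_le.
  have g_lb s : 0 <= s <= t1 -> gstar g k1 k0 <= g (x s).
    move=> /andP[s_ge0 s_le]; apply: gstar_le => //.
    have s_in : 0 <= s <= sigma by rewrite s_ge0 (le_trans s_le) // ltW.
    rewrite (sol_x_le_k0 lambda_ge0 (g_ge0 hg) sol) // andbT (le_trans k1_le) //.
    by apply: (sol_x_nonincreasing lambda_ge0 (g_ge0 hg) sol) => //; exact: ltW.
  have := sol_x_le lambda_ge0 sol a_int t1_in g_lb.
  move: lambda_gt; rewrite ltr_pdivrMr ?mulr_gt0 // mulrA; lra.
split => //.
have := sol_x_ge lambda_ge0 (g_ge0 hg) sol t1 t1_in.
move: gamma1_le; rewrite ler_pdivlMr // => gamma1_le; nra.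
Qed.
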